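(* Let $N\ge 2$ be an integer and let $\boldsymbol{A}=(A_1,\dots,A_N)$, $\boldsymbol{B}=(B_1,\dots,B_N)$ be probability vectors ($A_i,B_i\ge 0$, $\sum_iA_i=\sum_iB_i=1$), and put $S_i=A_i+B_i$. If $S_i>1$ for some $i$, then no joint selection probability matrix achieves loss $L=0$. Moreover, if $\max_i S_i=S_N>1$, then $$L_{\min}=\frac{N}{2(N-1)}(S_N-1)^2,$$ and this minimum is attained by the matrix $\tilde{\boldsymbol P}=(\tilde p_{i,j})$ given by $\tilde p_{i,j}=0$ if $i\ne N$ and $j\ne N$, $\tilde p_{i,N}=A_i+\epsilon$ for $i=1,\dots,N-1$, $\tilde p_{N,j}=B_j+\epsilon$ for $j=1,\dots,N-1$, $\tilde p_{N,N}=0$, where $\epsilon=\frac{S_N-1}{2(N-1)}$.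
   Context: A joint selection probability matrix is an $N\times N$ real matrix $\boldsymbol{P}=(p_{i,j})$ with $p_{i,i}=0$ for all $i$, $p_{i,j}\ge 0$ for all $i,j$, and $\sum_{i,j}p_{i,j}=1$. The satisfied preferences are $\pi_A(i)=\sum_j p_{i,j}$ and $\pi_B(j)=\sum_i p_{i,j}$, the loss is $L(\boldsymbol P)=\sum_i(\pi_A(i)-A_i)^2+\sum_j(\pi_B(j)-B_j)^2$, and $L_{\min}$ is the minimum of $L$ over all joint selection probability matrices. *)

From mathcomp Require Import all_boot all_order all_algebra.
From mathcomp Require Import reals.
Set Implicit Arguments. Unset Strict Implicit. Unset Printing Implicit Defensive.
Import Order.TTheory GRing.Theory Num.Theory.
Local Open Scope ring_scope.

Definition prob_vec (R : realType) (N : nat) (A : 'I_N -> R) : Prop :=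
  (forall i, 0 <= A i) /\ \sum_i A i = 1.

Definition jsp_matrix (R : realType) (N : nat) (P : 'M[R]_N) : Prop :=
  (forall i, P i i = 0) /\ (forall i j, 0 <= P i j) /\ \sum_i \sum_j P i j = 1.

Definition piA (R : realType) (N : nat) (P : 'M[R]_N) (i : 'I_N) : R :=
  \sum_j P i j.
Definition piB (R : realType) (N : nat) (P : 'M[R]_N) (j : 'I_N) : R :=
  \sum_i P i j.

Definition loss (R : realType) (N : nat) (A B : 'I_N -> R) (P : 'M[R]_N) : R :=
  \sum_i (piA P i - A i) ^+ 2 + \sum_j (piB P j - B j) ^+ 2.

(* the matrix P~ of the paper, with iN the last index N *)
Definition Ptilde (R : realType) (N : nat) (A B : 'I_N -> R) (iN : 'I_N) : 'M[R]_N :=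
  let eps := (A iN + B iN - 1) / (2 * (N%:R - 1)) in
  \matrix_(i, j)
    if (i != iN) && (j != iN) then 0
    else if (i != iN) && (j == iN) then A i + eps
    else if (i == iN) && (j != iN) then B j + eps
    else 0.

From mathcomp Require Import all_boot all_order all_algebra.
From mathcomp Require Import reals ring lra.
Set Implicit Arguments. Unset Strict Implicit.
Import Order.TTheory GRing.Theory Num.Theory.
Local Open Scope ring_scope.

(* The row and the column of an index i of a joint selection probability matrix
   meet only on the (zero) diagonal, so pi_A(i) + pi_B(i) <= 1; when
   S_i = A_i + B_i > 1 the deviations x = pi_A(i) - A_i and y = pi_B(i) - B_i
   therefore satisfy x + y <= 1 - S_i < 0.  The deviations pi_A - A sum to zero,
   so by Cauchy-Schwarz on the other N - 1 indices they contribute at least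
   x^2 / (N - 1), and likewise for B; hence
   L >= N/(N-1) (x^2 + y^2) >= N/(2(N-1)) (x + y)^2 >= N/(2(N-1)) (S_i - 1)^2.
   The matrix P~ spreads the excess S_N - 1 evenly over the other indices and
   attains equality in each step. *)

Lemma natr_sub1_gt0 {R : numDomainType} (n : nat) : (1 < n)%N -> 0 < n%:R - 1 :> R.
Proof. by move=> n_gt1; rewrite subr_gt0 ltr1n. Qed.

Lemma sqr_sum_le_card_sum_sqr {R : realDomainType} {I : finType} (A : {pred I})
    (d : I -> R) :
  (\sum_(i in A) d i) ^+ 2 <= #|A|%:R * \sum_(i in A) d i ^+ 2.
Proof.
set S := \sum_(i in A) d i; set Q := \sum_(i in A) d i ^+ 2.
have row_sum i :
    \sum_(j in A) (d i - d j) ^+ 2 = #|A|%:R * d i ^+ 2 - 2 * d i * S + Q.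
  under eq_bigr => j _ do rewrite sqrrB -mulr_natr.
  rewrite !big_split /= sumrN sumr_const -mulr_suml -mulr_sumr -/S -/Q; ring.
have : 0 <= \sum_(i in A) \sum_(j in A) (d i - d j) ^+ 2.
  by do 2!apply: sumr_ge0 => ? _; exact: sqr_ge0.
under eq_bigr => i _ do rewrite row_sum.
rewrite !big_split /= sumrN -mulr_sumr -mulr_suml -mulr_sumr sumr_const.
rewrite -/S -/Q -[Q *+ _]mulr_natr; nra.
Qed.

Section OrdinalSums.

Variables (R : realDomainType) (N : nat).
Implicit Types (f d : 'I_N -> R).

Lemma sumr_predC1 f (i0 : 'I_N) : \sum_(i | i != i0) f i = \sum_i f i - f i0.
Proof. by rewrite [\sum_i f i](bigD1 i0) //= addrAC subrr add0r. Qed.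

Lemma sumr_const_predC1 (i0 : 'I_N) (c : R) : \sum_(i | i != i0) c = (N%:R - 1) * c.
Proof. by rewrite sumr_predC1 sumr_const card_ord mulrBl mul1r mulr_natl. Qed.

Lemma sqr_sum_predC1_le d (i0 : 'I_N) :
  (\sum_(i | i != i0) d i) ^+ 2 <= (N%:R - 1) * \sum_(i | i != i0) d i ^+ 2.
Proof.
have N_gt0 : (0 < N)%N by case: N i0 => [[]|].
by have := sqr_sum_le_card_sum_sqr (predC1 i0) d; rewrite cardC1 card_ord -subn1 natrB.
Qed.

Lemma sqr_le_sum_sqr_of_sum0 d (i0 : 'I_N) :
  \sum_i d i = 0 -> N%:R * d i0 ^+ 2 <= (N%:R - 1) * \sum_i d i ^+ 2.
Proof.
move=> sum_d0.
have := sqr_sum_predC1_le d i0; rewrite sumr_predC1 sum_d0 sub0r sqrrN => cs.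
rewrite (bigD1 i0) //= mulrDr mulrBl mul1r; lra.
Qed.

End OrdinalSums.

Section JointSelection.

Variables (R : realType) (N : nat).
Implicit Types (A B : 'I_N -> R) (P : 'M[R]_N).

Lemma jsp_sum_piA P : jsp_matrix P -> \sum_i piA P i = 1.
Proof. by case=> _ []. Qed.

Lemma jsp_sum_piB P : jsp_matrix P -> \sum_j piB P j = 1.
Proof. by case=> _ [_]; rewrite /piB exchange_big. Qed.

Lemma jsp_piA_add_piB_le1 P i : jsp_matrix P -> piA P i + piB P i <= 1.
Proof.
move=> [P_diag [P_ge0 P_sum]]; rewrite /piA /piB.
rewrite (bigD1 i) //= in P_sum.
rewrite [\sum_k P k i](bigD1 i) //= P_diag add0r -P_sum lerD2l.
apply: ler_sum => k _; rewrite (bigD1 i) //= -[leLHS]addr0 lerD2l.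
exact: sumr_ge0.
Qed.

Definition loss_min (S : R) : R := N%:R / (2 * (N%:R - 1)) * (S - 1) ^+ 2.

Lemma loss_min_gt0 S : (1 < N)%N -> 1 < S -> 0 < loss_min S.
Proof.
move=> N_gt1 S_gt1; rewrite /loss_min mulr_gt0 ?exprn_gt0 ?subr_gt0 //.
by rewrite divr_gt0 ?mulr_gt0 ?natr_sub1_gt0 // ltr0n ltnW.
Qed.

Lemma loss_min_le_loss A B P i :
  (1 < N)%N -> prob_vec A -> prob_vec B -> jsp_matrix P -> 1 <= A i + B i ->
  loss_min (A i + B i) <= loss A B P.
Proof.
move=> N_gt1 [_ sumA] [_ sumB] jspP S_ge1.
have k_gt0 : 0 < N%:R - 1 :> R := natr_sub1_gt0 N_gt1.
have devA : N%:R * (piA P i - A i) ^+ 2 <= (N%:R - 1) * \sum_j (piA P j - A j) ^+ 2.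
  by apply: sqr_le_sum_sqr_of_sum0; rewrite sumrB jsp_sum_piA // sumA subrr.
have devB : N%:R * (piB P i - B i) ^+ 2 <= (N%:R - 1) * \sum_j (piB P j - B j) ^+ 2.
  by apply: sqr_le_sum_sqr_of_sum0; rewrite sumrB jsp_sum_piB // sumB subrr.
move: devA devB (jsp_piA_add_piB_le1 i jspP); rewrite /loss_min /loss.
set x := piA P i - A i; set y := piB P i - B i => devA devB piAB_le1.
have excess_le : (A i + B i - 1) ^+ 2 <= (x + y) ^+ 2 by rewrite /x /y; nra.
have sqr_add_le : (x + y) ^+ 2 <= 2 * (x ^+ 2 + y ^+ 2).
  by have := sqr_ge0 (x - y); nra.
rewrite mulrAC ler_pdivrMr ?mulr_gt0 //.
apply: (le_trans (ler_wpM2l (ler0n _ _) (le_trans excess_le sqr_add_le))).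
lra.
Qed.

Definition eps_tilde A B (iN : 'I_N) : R := (A iN + B iN - 1) / (2 * (N%:R - 1)).

Lemma eps_tildeC A B iN : eps_tilde B A iN = eps_tilde A B iN.
Proof. by rewrite /eps_tilde [B iN + _]addrC. Qed.

Lemma eps_tildeE A B iN :
  (1 < N)%N -> 2 * (N%:R - 1) * eps_tilde A B iN = A iN + B iN - 1.
Proof.
by move=> N_gt1; rewrite mulrC divfK // mulf_neq0 // lt0r_neq0 // natr_sub1_gt0.
Qed.

Lemma PtildeE A B iN i j :
  Ptilde A B iN i j =
    if i == iN then (if j == iN then 0 else B j + eps_tilde A B iN)
    else (if j == iN then A i + eps_tilde A B iN else 0).
Proof. by rewrite mxE; case: (i == iN); case: (j == iN). Qed.

Lemma piB_Ptilde A B iN j : piB (Ptilde A B iN) j = piA (Ptilde B A iN) j.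
Proof.
apply: eq_bigr => i _; rewrite !PtildeE eps_tildeC.
by case: (i == iN); case: (j == iN).
Qed.

Lemma piA_Ptilde_last A B iN :
  \sum_j B j = 1 -> piA (Ptilde A B iN) iN = 1 - B iN + (N%:R - 1) * eps_tilde A B iN.
Proof.
move=> sumB; rewrite /piA (bigD1 iN) //= PtildeE !eqxx add0r.
under eq_bigr => j /negbTE j_neq do rewrite PtildeE eqxx j_neq.
by rewrite big_split /= sumr_predC1 sumr_const_predC1 sumB.
Qed.

Lemma piA_Ptilde_neq A B iN i :
  i != iN -> piA (Ptilde A B iN) i = A i + eps_tilde A B iN.
Proof.
move=> /negbTE i_neq; rewrite /piA (bigD1 iN) //= PtildeE i_neq eqxx big1 ?addr0 //.
by move=> j /negbTE j_neq; rewrite PtildeE i_neq j_neq.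
Qed.

(* The deviation is -(N - 1) eps at iN and eps elsewhere. *)
Lemma sum_sqr_dev_piA_Ptilde A B iN :
  (1 < N)%N -> \sum_j B j = 1 ->
  \sum_i (piA (Ptilde A B iN) i - A i) ^+ 2 = (N%:R - 1) * N%:R * eps_tilde A B iN ^+ 2.
Proof.
move=> N_gt1 sumB; set e := eps_tilde A B iN.
rewrite (bigD1 iN) //= piA_Ptilde_last //.
under eq_bigr => i i_neq do rewrite piA_Ptilde_neq // addrC addKr.
rewrite sumr_const_predC1.
have -> : 1 - B iN + (N%:R - 1) * e - A iN = - ((N%:R - 1) * e).
  by have := eps_tildeE A B iN N_gt1; rewrite -/e; lra.
rewrite -/e; ring.
Qed.

Lemma jsp_Ptilde A B iN :
  (1 < N)%N -> prob_vec A -> prob_vec B -> 1 <= A iN + B iN ->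
  jsp_matrix (Ptilde A B iN).
Proof.
move=> N_gt1 [A_ge0 sumA] [B_ge0 sumB] S_ge1.
have e_ge0 : 0 <= eps_tilde A B iN.
  by rewrite divr_ge0 ?subr_ge0 // mulr_ge0 // ltW // natr_sub1_gt0.
split; [|split].
- by move=> i; rewrite PtildeE; case: eqP.
- move=> i j; rewrite PtildeE.
  by case: (i == iN); case: (j == iN); rewrite ?addr_ge0.
- rewrite -/(\sum_i piA (Ptilde A B iN) i) (bigD1 iN) //= piA_Ptilde_last //.
  under eq_bigr => i i_neq do rewrite piA_Ptilde_neq //.
  rewrite big_split /= sumr_predC1 sumr_const_predC1 sumA.
  have := eps_tildeE A B iN N_gt1; lra.
Qed.

Lemma loss_Ptilde A B iN :
  (1 < N)%N -> prob_vec A -> prob_vec B ->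
  loss A B (Ptilde A B iN) = loss_min (A iN + B iN).
Proof.
move=> N_gt1 [_ sumA] [_ sumB].
rewrite /loss sum_sqr_dev_piA_Ptilde //.
under eq_bigr => j _ do rewrite piB_Ptilde.
rewrite sum_sqr_dev_piA_Ptilde // (eps_tildeC A B) /loss_min -eps_tildeE //.
have k_neq0 : N%:R - 1 != 0 :> R := lt0r_neq0 (natr_sub1_gt0 N_gt1).
by field.
Qed.

End JointSelection.

Theorem theorem2p2 (R : realType) (N : nat) (A B : 'I_N -> R) :
  (2 <= N)%N -> prob_vec A -> prob_vec B ->
  ((exists i, A i + B i > 1) ->
     forall P : 'M[R]_N, jsp_matrix P -> loss A B P != 0)
  /\
  (forall iN : 'I_N, val iN = N.-1 ->
     (forall i, A i + B i <= A iN + B iN) -> A iN + B iN > 1 ->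
     let Lmin := N%:R / (2 * (N%:R - 1)) * (A iN + B iN - 1) ^+ 2 in
     jsp_matrix (Ptilde A B iN) /\
     loss A B (Ptilde A B iN) = Lmin /\
     (forall P : 'M[R]_N, jsp_matrix P -> Lmin <= loss A B P)).
Proof.
move=> N_gt1 probA probB; split.
  move=> [i S_gt1] P jspP; rewrite gt_eqF //.
  apply: lt_le_trans (loss_min_gt0 N_gt1 S_gt1) _.
  by apply: loss_min_le_loss => //; exact: ltW.
move=> iN _ _ S_gt1 Lmin; have S_ge1 := ltW S_gt1.
split; [exact: jsp_Ptilde | split; first exact: loss_Ptilde].
by move=> P jspP; apply: loss_min_le_loss.
Qed.
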